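(* Let $X$ be a periodic semigroup, $e\in E(X)$, and for $n\in\mathbb N$ let $Z_n=\{z\in Z(X): z^n\in H_e\}$. If for some $\ell\in\mathbb N$ the set $Z_\ell\setminus H_e$ is infinite, then there exist a finite set $F\subseteq Z_\ell$ and an infinite set $A\subseteq Z_\ell\setminus FX^1$ such that $AA\subseteq F\cup H_e\subseteq FX^1$.
   Context: Periodic: every element has an idempotent power. $E(X)$: idempotents; $H_e$: maximal subgroup containing $e$; $Z(X)$: center. $X^1=X\cup\{1\}$ with adjoined identity, $FX^1=\{fx:f\in F,x\in X^1\}$, $AA=\{ab:a,b\in A\}$. *)

From Stdlib Require Import List.
Set Implicit Arguments.

Section Semigroup.
Variables (T : Type) (mul : T -> T -> T).

(* positive powers: spow x n = x^n for n >= 1 (spow x 0 := x, never used) *)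
Fixpoint spow (x : T) (n : nat) : T :=
  match n with
  | 0 => x
  | 1 => x
  | S m => mul (spow x m) x
  end.

Definition idempotent (e : T) : Prop := mul e e = e.

Definition periodic : Prop :=
  forall x, exists n, 1 <= n /\ idempotent (spow x n).

Definition center (z : T) : Prop := forall x, mul z x = mul x z.

Definition subgroup_with_id (G : T -> Prop) (e : T) : Prop :=
  G e /\
  (forall x y, G x -> G y -> G (mul x y)) /\
  (forall x, G x -> mul e x = x /\ mul x e = x) /\
  (forall x, G x -> exists y, G y /\ mul x y = e /\ mul y x = e).

(* H_e: the maximal subgroup containing the idempotent e, i.e. the union of
   all subgroups of X containing e (any such subgroup has identity e). *)
Definition Hmax (e : T) (x : T) : Prop :=
  exists G, subgroup_with_id G e /\ G x.

Definition Zn (e : T) (n : nat) (z : T) : Prop :=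
  center z /\ Hmax e (spow z n).

Definition FX1 (F : T -> Prop) (y : T) : Prop :=
  exists f, F f /\ (y = f \/ exists x, y = mul f x).

End Semigroup.

Definition finite_set (T : Type) (S : T -> Prop) : Prop :=
  exists l : list T, forall x, S x -> In x l.

Definition infinite_set (T : Type) (S : T -> Prop) : Prop := ~ finite_set S.

(* If Z_l \ H_e is infinite, there are a
   finite F ⊆ Z_l and an infinite A ⊆ Z_l \ F X^1 with AA ⊆ F ∪ H_e ⊆ F X^1.

   Let k be the least level with Z_k \ H_e infinite; then k >= 2 since Z_1 ⊆ H_e,
   Z_(k-1) \ H_e is finite, and Top := Z_k \ Z_(k-1) is infinite.  The only
   algebraic tool is a divisor lemma: a central element of some Z_N lying in
   f X^1, for f in Z_m, lies in Z_m.  It shows that Top is closed modulo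
   Z_(k-1), that squares and products (pm)(qm) of elements of Top lie in
   Z_(k-1), that Top misses f X^1 for f in Z_(k-1), and that b is never in
   (cb) X^1 for b, c in Top.  From these properties alone a Ramsey-type
   argument (either some aTop ∩ Top is infinite, or a diagonal sequence
   b_0, b_1, ... has products b_i b_j, i < j, in Z_(k-1) or equal to a colour
   c_i) yields an infinite A ⊆ Top and a finite C ⊆ Top with AA ⊆ Z_(k-1) ∪ C
   and A ∩ C X^1 = ∅.  Finally F := (Z_(k-1) \ H_e) ∪ {g} ∪ C, where g is any
   power a^k in H_e, and H_e ⊆ g X^1. *)

From Stdlib Require Import PeanoNat List Lia Classical ClassicalEpsilon FinFun Wf_nat.
Set Implicit Arguments.

Definition in_principal (T : Type) (mul : T -> T -> T) (f a : T) : Prop :=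
  a = f \/ exists x, a = mul f x.

Section FiniteSets.
Variable T : Type.

Lemma finite_subset (P Q : T -> Prop) :
  finite_set Q -> (forall x, P x -> Q x) -> finite_set P.
Proof. intros [l Hl] H; exists l; auto. Qed.

Lemma finite_union (P Q : T -> Prop) :
  finite_set P -> finite_set Q -> finite_set (fun x => P x \/ Q x).
Proof.
  intros [l1 H1] [l2 H2]; exists (l1 ++ l2); intros x [Hx|Hx];
    apply in_or_app; auto.
Qed.

Lemma finite_singleton (a : T) : finite_set (fun x => x = a).
Proof. exists (a :: nil); intros x ->; left; reflexivity. Qed.

Lemma infinite_inhabited (P : T -> Prop) : infinite_set P -> exists x, P x.
Proof.
  intros H; apply NNPP; intro N; apply H; exists nil; intros x Hx; apply N; eauto.
Qed.

Lemma infinite_cover (P Q R : T -> Prop) :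
  infinite_set P -> (forall x, P x -> Q x \/ R x) -> finite_set R -> infinite_set Q.
Proof.
  intros HP H HR HQ; apply HP.
  apply finite_subset with (1 := finite_union HQ HR); exact H.
Qed.

Lemma infinite_pigeonhole (U : Type) (P : T -> Prop) (f : T -> U) (l : list U) :
  infinite_set P -> (forall x, P x -> In (f x) l) ->
  exists c, infinite_set (fun x => P x /\ f x = c).
Proof.
  revert P; induction l as [|a l IH]; intros P HP Hl.
  - exfalso; apply HP; exists nil; exact Hl.
  - destruct (classic (infinite_set (fun x => P x /\ f x = a))) as [Ha|Ha].
    + exists a; exact Ha.
    + destruct (IH (fun x => P x /\ f x <> a)) as [c Hc].
      * apply (infinite_cover HP (R := fun x => P x /\ f x = a)).
        -- intros x Hx; destruct (classic (f x = a)); auto.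
        -- apply NNPP; exact Ha.
      * intros x [Hx Hn]; destruct (Hl x Hx); [congruence | assumption].
      * exists c; intro Hfin; apply Hc.
        apply finite_subset with (1 := Hfin); intros x [[? ?] ?]; auto.
Qed.

Lemma infinite_of_injection (P : T -> Prop) (u : nat -> T) :
  (forall n, P (u n)) -> (forall i j, u i = u j -> i = j) -> infinite_set P.
Proof.
  intros HP Hu [l Hl].
  set (prefix := map u (seq 0 (S (length l)))).
  assert (Hnodup : NoDup prefix)
    by (apply Injective_map_NoDup; [exact Hu | apply seq_NoDup]).
  assert (Hincl : incl prefix l).
  { intros x Hx; apply in_map_iff in Hx; destruct Hx as [n [<- _]]; auto. }
  pose proof (NoDup_incl_length Hnodup Hincl) as Hle.
  unfold prefix in Hle; rewrite length_map, length_seq in Hle; lia.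
Qed.

Lemma finite_witness_bound (P : T -> Prop) (Q : nat -> T -> Prop) :
  finite_set P -> (forall c, P c -> exists j, Q j c) ->
  exists N, forall c, P c -> exists j, j < N /\ Q j c.
Proof.
  intros [l Hl] HQ.
  enough (Hb : exists N, forall c, In c l -> P c -> exists j, j < N /\ Q j c)
    by (destruct Hb as [N HN]; exists N; auto).
  clear Hl; induction l as [|a l [N IH]].
  - exists 0; intros c [].
  - destruct (classic (P a)) as [Pa|Pa].
    + destruct (HQ a Pa) as [j0 Hj0]; exists (max N (S j0)).
      intros c [<-|Hc] Pc; [exists j0; split; [lia | exact Hj0] |].
      destruct (IH c Hc Pc) as [j [? ?]]; exists j; split; [lia | assumption].
    + exists N; intros c [<-|Hc] Pc; [contradiction | auto].
Qed.

End FiniteSets.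

Section RamseyCore.
(* The combinatorial core, for an arbitrary binary operation: an infinite set
   Top, commutative and closed modulo a set Low, with the properties proved
   below for Top = Z_k \ Z_(k-1) and Low = Z_(k-1). *)
Variables (T : Type) (mul : T -> T -> T) (Top Low : T -> Prop).
Hypothesis Top_infinite : infinite_set Top.
Hypothesis Top_closed : forall a b, Top a -> Top b -> Top (mul a b) \/ Low (mul a b).
Hypothesis Top_comm : forall a b, Top a -> Top b -> mul a b = mul b a.
Hypothesis Top_square : forall a, Top a -> Low (mul a a).
Hypothesis Top_shared : forall m p q, Top m -> Top p -> Top q -> Low (mul (mul p m) (mul q m)).
Hypothesis Top_strict : forall b c, Top b -> Top c -> ~ in_principal mul (mul c b) b.

Definition core_pair (A C : T -> Prop) : Prop :=
  infinite_set A /\ finite_set C /\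
  (forall a, A a -> Top a) /\ (forall c, C c -> Top c) /\
  (forall a b, A a -> A b -> Low (mul a b) \/ C (mul a b)) /\
  (forall a, A a -> ~ FX1 mul C a).

Lemma core_pair_uncoloured (A : T -> Prop) : infinite_set A -> (forall a, A a -> Top a) ->
  (forall a b, A a -> A b -> Low (mul a b)) -> core_pair A (fun _ => False).
Proof.
  intros HA HAT HAL; repeat split; auto.
  - exists nil; intros _ [].
  - intros _ [].
  - intros a _ [f [[] _]].
Qed.

Definition multiples (a y : T) : Prop := Top y /\ exists x, Top x /\ y = mul a x.

(* if some aTop ∩ Top is infinite, it is the required set: products
   (ax)(ax') = (xa)(x'a) lie in Low *)
Lemma core_infinite_multiples a : Top a -> infinite_set (multiples a) ->
  core_pair (multiples a) (fun _ => False).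
Proof.
  intros Ta Ha; apply core_pair_uncoloured; [exact Ha | intros y [Ty _]; exact Ty |].
  intros y y' [_ [x [Tx ->]]] [_ [x' [Tx' ->]]].
  rewrite (Top_comm Ta Tx), (Top_comm Ta Tx'); apply Top_shared; assumption.
Qed.

Section FiniteMultiples.
Hypothesis multiples_finite : forall a, Top a -> finite_set (multiples a).
Variable x0 : T.

Definition refines (B : T -> Prop) (b : T) (B' : T -> Prop) (c : T) : Prop :=
  (forall x, B' x -> B x /\ x <> b) /\ infinite_set B' /\
  ((forall x, B' x -> Low (mul b x)) \/ (Top c /\ forall x, B' x -> mul b x = c)).

Lemma refines_exists B b : infinite_set B -> (forall x, B x -> Top x) -> B b ->
  exists B' c, refines B b B' c.
Proof.
  intros HB HBT Bb.
  assert (Hrest : infinite_set (fun x => B x /\ x <> b)).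
  { apply (infinite_cover HB (R := fun x => x = b)); [| apply finite_singleton].
    intros x Hx; destruct (classic (x = b)); auto. }
  destruct (classic (infinite_set (fun x => (B x /\ x <> b) /\ Low (mul b x)))) as [Hlow|Hlow].
  - exists (fun x => (B x /\ x <> b) /\ Low (mul b x)), b.
    split; [intros x [? _]; assumption | split; [exact Hlow | left; intros x [_ ?]; assumption]].
  - assert (Hhigh : infinite_set (fun x => (B x /\ x <> b) /\ ~ Low (mul b x))).
    { apply (infinite_cover Hrest (R := fun x => (B x /\ x <> b) /\ Low (mul b x))).
      - intros x Hx; destruct (classic (Low (mul b x))); auto.
      - apply NNPP; exact Hlow. }
    assert (Hmult : forall x, (B x /\ x <> b) /\ ~ Low (mul b x) -> multiples b (mul b x)).
    { intros x [[Bx _] Nx]; split; [| exists x; split; [apply HBT; exact Bx | reflexivity]].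
      destruct (Top_closed (HBT b Bb) (HBT x Bx)); [assumption | contradiction]. }
    destruct (multiples_finite (HBT b Bb)) as [lv Hlv].
    destruct (infinite_pigeonhole (fun x => mul b x) lv Hhigh) as [c Hc].
    + intros x Hx; apply Hlv, Hmult, Hx.
    + exists (fun x => ((B x /\ x <> b) /\ ~ Low (mul b x)) /\ mul b x = c), c.
      split; [intros x [[? _] _]; assumption | split; [exact Hc | right]].
      split; [| intros x [_ ?]; assumption].
      destruct (infinite_inhabited Hc) as [x [Hx <-]]; apply (Hmult x Hx).
Qed.

Definition pick (B : T -> Prop) : T := epsilon (inhabits x0) B.
Definition next (B : T -> Prop) : (T -> Prop) * T :=
  epsilon (inhabits (fun _ => False, x0)) (fun p => refines B (pick B) (fst p) (snd p)).

Lemma next_spec B : infinite_set B -> (forall x, B x -> Top x) ->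
  B (pick B) /\ refines B (pick B) (fst (next B)) (snd (next B)).
Proof.
  intros HB HBT.
  assert (Hpick : B (pick B)).
  { unfold pick; apply epsilon_spec, infinite_inhabited, HB. }
  split; [exact Hpick |]; unfold next.
  apply (epsilon_spec _ (fun p => refines B (pick B) (fst p) (snd p))).
  destruct (@refines_exists B (pick B) HB HBT Hpick) as [B' [c Hr]]; exists (B', c); exact Hr.
Qed.

(* the nested infinite sets Top = B_0 ⊇ B_1 ⊇ ..., with b_i picked in B_i and
   colour c_i of b_i on B_(i+1) *)
Fixpoint level (n : nat) : T -> Prop :=
  match n with 0 => Top | S n => fst (next (level n)) end.
Definition bs (n : nat) : T := pick (level n).
Definition cs (n : nat) : T := snd (next (level n)).

Lemma level_infinite n : infinite_set (level n) /\ (forall x, level n x -> Top x).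
Proof.
  induction n as [|n [IHinf IHtop]]; [split; auto |].
  destruct (next_spec IHinf IHtop) as [_ [Hsub [Hinf _]]].
  split; [exact Hinf | intros x Hx; apply IHtop, (Hsub x Hx)].
Qed.

Lemma level_spec n : level n (bs n) /\ refines (level n) (bs n) (level (S n)) (cs n).
Proof. destruct (level_infinite n) as [Hinf Htop]; exact (next_spec Hinf Htop). Qed.

Lemma level_antitone m n x : m <= n -> level n x -> level m x.
Proof.
  induction 1 as [|n _ IH]; [auto |].
  intros Hx; apply IH, (proj1 (proj1 (proj2 (level_spec n)) x Hx)).
Qed.

Lemma bs_later i j : i < j -> level (S i) (bs j).
Proof. intros Hij; apply (level_antitone (n := j)); [exact Hij | exact (proj1 (level_spec j))]. Qed.

Lemma bs_top n : Top (bs n).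
Proof. apply (proj2 (level_infinite n)), (proj1 (level_spec n)). Qed.

Lemma bs_injective i j : bs i = bs j -> i = j.
Proof.
  assert (Hne : forall i j, i < j -> bs j <> bs i).
  { intros i' j' Hij; exact (proj2 (proj1 (proj2 (level_spec i')) _ (bs_later Hij))). }
  intros Hb; destruct (Nat.lt_trichotomy i j) as [Hij|[Hij|Hij]]; auto.
  - destruct (Hne i j Hij); auto.
  - destruct (Hne j i Hij); auto.
Qed.

Definition blue (i : nat) : Prop :=
  Top (cs i) /\ forall x, level (S i) x -> mul (bs i) x = cs i.

Lemma bs_product i j : i < j ->
  Low (mul (bs i) (bs j)) \/ (blue i /\ mul (bs i) (bs j) = cs i).
Proof.
  intros Hij; destruct (level_spec i) as [_ [_ [_ [Hlow|[Hc Hconst]]]]].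
  - left; apply Hlow, bs_later, Hij.
  - right; split; [split; assumption | apply Hconst, bs_later, Hij].
Qed.

Definition colour (c : T) : Prop := exists i, blue i /\ c = cs i.

(* finitely many colours: a tail of the b_i, with C the colours *)
Lemma core_finite_colours : finite_set colour ->
  exists A, core_pair A colour.
Proof.
  intros Hfin.
  destruct (finite_witness_bound (fun j c => blue j /\ c = cs j) Hfin (fun c Hc => Hc))
    as [N HN].
  exists (fun a => exists i, N <= i /\ a = bs i); repeat split.
  - apply (@infinite_of_injection _ _ (fun n => bs (N + n))).
    + intros n; exists (N + n); split; [lia | reflexivity].
    + intros i j Hij; apply bs_injective in Hij; lia.
  - exact Hfin.
  - intros a [i [_ ->]]; apply bs_top.
  - intros c [i [[Hc _] ->]]; exact Hc.
  - intros a b [i [_ ->]] [j [_ ->]].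
    destruct (Nat.lt_trichotomy i j) as [Hij|[<-|Hij]].
    + destruct (bs_product Hij) as [?|[Hb ->]]; [left; assumption | right; exists i; auto].
    + left; apply Top_square, bs_top.
    + rewrite Top_comm by apply bs_top.
      destruct (bs_product Hij) as [?|[Hb ->]]; [left; assumption | right; exists j; auto].
  - intros a [i [Hi ->]] [c [Hc Hprin]].
    destruct (HN c Hc) as [j [Hj [[_ Hconst] ->]]].
    rewrite <- (Hconst (bs i)) in Hprin by (apply bs_later; lia).
    exact (Top_strict (bs_top i) (bs_top j) Hprin).
Qed.

(* infinitely many colours: products c_i c_j = (b_i b_m)(b_j b_m) lie in Low *)
Lemma core_infinite_colours : infinite_set colour -> core_pair colour (fun _ => False).
Proof.
  intros Hinf; apply core_pair_uncoloured; [exact Hinf | intros c [i [[Hc _] ->]]; exact Hc |].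
  intros a b [i [[_ Hi] ->]] [j [[_ Hj] ->]].
  rewrite <- (Hi (bs (S (i + j)))), <- (Hj (bs (S (i + j)))) by (apply bs_later; lia).
  apply Top_shared; apply bs_top.
Qed.

End FiniteMultiples.

Lemma ramsey_core : exists A C, core_pair A C.
Proof.
  destruct (classic (exists a, Top a /\ infinite_set (multiples a))) as [[a [Ta Ha]]|Hfin].
  - exists (multiples a), (fun _ => False); apply core_infinite_multiples; assumption.
  - assert (Hmult : forall a, Top a -> finite_set (multiples a)).
    { intros a Ta; apply NNPP; intro Hinf; apply Hfin; exists a; split; assumption. }
    destruct (infinite_inhabited Top_infinite) as [x0 _].
    destruct (classic (finite_set (colour x0))) as [Hc|Hc].
    + destruct (core_finite_colours Hmult Hc) as [A HA]; exists A, (colour x0); exact HA.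
    + exists (colour x0), (fun _ => False); apply (core_infinite_colours Hmult); exact Hc.
Qed.

End RamseyCore.

Section Semigroup.
Variables (T : Type) (mul : T -> T -> T) (e : T).
Hypothesis mulA : forall x y z, mul x (mul y z) = mul (mul x y) z.
Hypothesis He : idempotent mul e.
Local Notation H := (Hmax mul e).
Local Notation pw := (spow mul).
Local Notation Z := (center mul).

Lemma pw_S x n : 1 <= n -> pw x (S n) = mul (pw x n) x.
Proof. intros Hn; destruct n; [lia | reflexivity]. Qed.

Lemma pw_add x n m : 1 <= n -> 1 <= m -> pw x (n + m) = mul (pw x n) (pw x m).
Proof.
  intros Hn Hm; induction m as [|m IH]; [lia |].
  destruct m as [|m].
  - rewrite Nat.add_1_r, pw_S by lia; reflexivity.
  - rewrite Nat.add_succ_r, !pw_S, IH, mulA by lia; reflexivity.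
Qed.

Lemma pw_mul x a b : 1 <= a -> 1 <= b -> pw (pw x a) b = pw x (a * b).
Proof.
  intros Ha Hb; induction b as [|b IH]; [lia |].
  destruct b as [|b]; [rewrite Nat.mul_1_r; reflexivity |].
  rewrite pw_S, IH by lia.
  replace (a * S (S b)) with (a * S b + a) by lia.
  rewrite pw_add by lia; reflexivity.
Qed.

Lemma center_mul a b : Z a -> Z b -> Z (mul a b).
Proof. intros Ha Hb y; rewrite <- mulA, Hb, mulA, Ha, mulA; reflexivity. Qed.

Lemma center_pw x n : Z x -> Z (pw x n).
Proof.
  intros Hx; induction n as [|n IH]; [exact Hx |].
  destruct n as [|n]; [exact Hx |].
  rewrite pw_S by lia; apply center_mul; assumption.
Qed.

Lemma pw_mul_central a b n : Z a -> 1 <= n -> pw (mul a b) n = mul (pw a n) (pw b n).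
Proof.
  intros Ha Hn; induction n as [|n IH]; [lia |].
  destruct n as [|n]; [reflexivity |].
  rewrite !pw_S, IH by lia.
  set (A := pw a (S n)); set (B := pw b (S n)).
  rewrite <- (mulA A B (mul a b)), (mulA B a b), <- (Ha B), <- (mulA a B b), mulA.
  reflexivity.
Qed.

Lemma pw_left_fixed c z n : mul c z = z -> mul c (pw z n) = pw z n.
Proof.
  intros Hz; induction n as [|n IH]; [exact Hz |].
  destruct n as [|n]; [exact Hz |].
  rewrite pw_S, mulA, IH by lia; reflexivity.
Qed.

Lemma self_principal_pw c b n :
  in_principal mul (mul c b) b -> 1 <= n -> exists t, b = mul (pw c n) t.
Proof.
  intros [Hb|[y Hb]] Hn.
  - exists b; induction n as [|n IH]; [lia |].
    destruct n as [|n]; [exact Hb |].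
    rewrite pw_S, <- mulA, <- Hb by lia; apply IH; lia.
  - exists (mul b (pw y n)); induction n as [|n IH]; [lia |].
    destruct n as [|n]; [rewrite mulA; exact Hb |].
    rewrite IH at 1 by lia; rewrite Hb at 1.
    rewrite (pw_S c (n := S n)) by lia.
    change (pw y (S (S n))) with (pw y (1 + S n)); rewrite pw_add by lia.
    rewrite <- !mulA; reflexivity.
Qed.

Definition local_unit (x : T) : Prop :=
  mul e x = x /\ mul x e = x /\
  exists y, mul e y = y /\ mul y e = y /\ mul x y = e /\ mul y x = e.

Lemma local_unit_subgroup : subgroup_with_id mul local_unit e.
Proof.
  split; [| split; [| split]].
  - split; [exact He | split; [exact He | exists e; repeat split; exact He]].
  - intros x x' [h1 [h2 [y [k1 [k2 [k3 k4]]]]]] [h1' [h2' [y' [k1' [k2' [k3' k4']]]]]].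
    split; [rewrite mulA, h1; reflexivity |].
    split; [rewrite <- mulA, h2'; reflexivity |].
    exists (mul y' y); repeat split.
    + rewrite mulA, k1'; reflexivity.
    + rewrite <- mulA, k2; reflexivity.
    + rewrite <- mulA, (mulA x' y' y), k3', k1, k3; reflexivity.
    + rewrite <- mulA, (mulA y x x'), k4, h1', k4'; reflexivity.
  - intros x [h1 [h2 _]]; split; assumption.
  - intros x [h1 [h2 [y [k1 [k2 [k3 k4]]]]]]; exists y; split; [| split; assumption].
    split; [exact k1 | split; [exact k2 | exists x; repeat split; assumption]].
Qed.

Lemma Hmax_local_unit x : H x <-> local_unit x.
Proof.
  split.
  - intros [G [[_ [_ [HGi HGv]]] Gx]].
    destruct (HGi x Gx) as [h1 h2]; destruct (HGv x Gx) as [y [Gy [k1 k2]]].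
    destruct (HGi y Gy) as [h1' h2'].
    split; [exact h1 | split; [exact h2 | exists y; repeat split; assumption]].
  - intros Hx; exists local_unit; split; [exact local_unit_subgroup | exact Hx].
Qed.

Lemma Hmax_mul x y : H x -> H y -> H (mul x y).
Proof.
  rewrite !Hmax_local_unit; destruct local_unit_subgroup as [_ [Hm _]]; apply Hm.
Qed.

Lemma Hmax_pw x n : H x -> H (pw x n).
Proof.
  intros Hx; induction n as [|n IH]; [exact Hx |].
  destruct n as [|n]; [exact Hx |].
  rewrite pw_S by lia; apply Hmax_mul; assumption.
Qed.

Lemma Hmax_left_id x : H x -> mul e x = x.
Proof. rewrite Hmax_local_unit; intros [Hx _]; exact Hx. Qed.

Lemma Hmax_principal g y : H g -> H y -> exists x, y = mul g x.
Proof.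
  rewrite !Hmax_local_unit; intros [_ [_ [h [_ [_ [Hgh _]]]]]] [Hy _].
  exists (mul h y); rewrite mulA, Hgh, Hy; reflexivity.
Qed.

(* a central z with e z = z and some power in H_e lies in H_e itself:
   its inverse is z^(n-1) h, where h is the inverse of z^n *)
Lemma central_root_Hmax z n : Z z -> 1 <= n -> mul e z = z -> H (pw z n) -> H z.
Proof.
  intros Hz Hn Hez Hzn.
  destruct n as [|n]; [lia |]; destruct n as [|n]; [exact Hzn |].
  rewrite Hmax_local_unit in Hzn |- *.
  destruct Hzn as [_ [_ [h [k1 [k2 [k3 k4]]]]]].
  rewrite pw_S in k3, k4 by lia.
  split; [exact Hez | split; [rewrite Hz; exact Hez |]].
  exists (mul (pw z (S n)) h); repeat split.
  - rewrite mulA, pw_left_fixed by exact Hez; reflexivity.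
  - rewrite <- mulA, k2; reflexivity.
  - rewrite mulA, Hz; exact k3.
  - rewrite <- mulA, <- Hz, mulA; exact k3.
Qed.

Lemma divisor_pw_Hmax w f t m N : Z w -> Z f -> 1 <= m -> 1 <= N ->
  H (pw f m) -> w = mul f t -> H (pw w N) -> H (pw w m).
Proof.
  intros Hw Hf Hm HN Hfm Hwt HwN.
  apply (central_root_Hmax (n := N)); [apply center_pw; assumption | exact HN | |].
  - rewrite Hwt, pw_mul_central by assumption.
    rewrite mulA, Hmax_left_id by assumption; reflexivity.
  - rewrite !pw_mul, Nat.mul_comm, <- pw_mul by lia.
    apply Hmax_pw; assumption.
Qed.

Lemma Zn_of_central_Hmax x n : Z x -> H x -> Zn mul e n x.
Proof. intros Zx Hx; split; [exact Zx | apply Hmax_pw; exact Hx]. Qed.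

Lemma Zn_mono z m n : 1 <= m -> m <= n -> Zn mul e m z -> Zn mul e n z.
Proof.
  intros Hm Hmn [Hz Hzm]; split; [exact Hz |].
  destruct (Nat.eq_dec m n) as [<-|Hne]; [exact Hzm |].
  change (H (pw (pw z n) 1)).
  apply (divisor_pw_Hmax (f := pw z m) (t := pw z (n - m)) (N := m));
    try apply center_pw; try assumption; try lia.
  - rewrite <- pw_add by lia; f_equal; lia.
  - rewrite pw_mul, Nat.mul_comm, <- pw_mul by lia; apply Hmax_pw; exact Hzm.
Qed.

Lemma Zn_mul a b n : 1 <= n -> Zn mul e n a -> Zn mul e n b -> Zn mul e n (mul a b).
Proof.
  intros Hn [Ha Ha'] [Hb Hb']; split; [apply center_mul; assumption |].
  rewrite pw_mul_central by assumption; apply Hmax_mul; assumption.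
Qed.

Lemma Zn_divisor a f m N : 1 <= m -> 1 <= N ->
  Zn mul e N a -> Zn mul e m f -> in_principal mul f a -> Zn mul e m a.
Proof.
  intros Hm HN [Za Ha] [Zf Hf] [->|[t ->]]; [split; assumption |].
  split; [exact Za |]; apply (divisor_pw_Hmax (f := f) (t := t) (N := N)); auto.
Qed.

(* the least level k with Z_k \ H_e infinite satisfies k >= 2, because
   Z_1 (= Z_0) lies in H_e *)
Lemma least_infinite_level l : infinite_set (fun z => Zn mul e l z /\ ~ H z) ->
  exists k, 2 <= k <= l /\ infinite_set (fun z => Zn mul e k z /\ ~ H z) /\
    finite_set (fun z => Zn mul e (k - 1) z /\ ~ H z).
Proof.
  intros Hl.
  set (P := fun n => infinite_set (fun z => Zn mul e n z /\ ~ H z)).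
  destruct (dec_inh_nat_subset_has_unique_least_element P (fun n => classic (P n))
              (ex_intro _ l Hl)) as [k [[Pk Hleast] _]].
  assert (Hk2 : 2 <= k).
  { destruct k as [|[|k]]; [| | lia]; exfalso; apply Pk; exists nil;
      intros z [[_ Hz] Nz]; exact (Nz Hz). }
  exists k; split; [split; [exact Hk2 | apply Hleast, Hl] | split; [exact Pk |]].
  apply NNPP; intro Hinf; specialize (Hleast (k - 1) Hinf); lia.
Qed.

Section Level.
Variable k : nat.
Hypothesis Hk2 : 2 <= k.
Hypothesis Zk_infinite : infinite_set (fun z => Zn mul e k z /\ ~ H z).
Hypothesis Zk1_finite : finite_set (fun z => Zn mul e (k - 1) z /\ ~ H z).
Let Low := Zn mul e (k - 1).
Let Top z := Zn mul e k z /\ ~ Low z.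

Lemma Top_infinite : infinite_set Top.
Proof.
  apply (infinite_cover Zk_infinite (R := fun z => Low z /\ ~ H z)); [| exact Zk1_finite].
  intros z [Hz Nz]; destruct (classic (Low z)); [right | left]; split; assumption.
Qed.

Lemma Top_closed a b : Top a -> Top b -> Top (mul a b) \/ Low (mul a b).
Proof.
  intros [Ha _] [Hb _].
  destruct (classic (Low (mul a b))); [right; assumption | left; split; [| assumption]].
  apply Zn_mul; [lia | assumption | assumption].
Qed.

Lemma Top_comm a b : Top a -> Top b -> mul a b = mul b a.
Proof. intros [[Za _] _] _; apply Za. Qed.

(* squares of Z_k lie in Z_(k-1), since 2(k-1) >= k *)
Lemma square_Low m : Zn mul e k m -> Low (mul m m).
Proof.
  intros Hm; destruct (Zn_mono (m := k) (n := (k - 1) + (k - 1)) ltac:(lia) ltac:(lia) Hm) as [Zm Hm2].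
  split; [apply center_mul; assumption |].
  rewrite pw_mul_central, <- pw_add by (assumption || lia); exact Hm2.
Qed.

Lemma Top_square a : Top a -> Low (mul a a).
Proof. intros [Ha _]; apply square_Low, Ha. Qed.

Lemma Top_not_below_Low a f : Top a -> Low f -> ~ in_principal mul f a.
Proof.
  intros [Ha Na] Hf Hprin; apply Na.
  apply (Zn_divisor (f := f) (N := k)); [lia | lia | assumption | assumption | assumption].
Qed.

(* (pm)(qm) = (mm)(pq) lies in Z_k and in (mm)X^1 with mm in Z_(k-1) *)
Lemma Top_shared m p q : Top m -> Top p -> Top q -> Low (mul (mul p m) (mul q m)).
Proof.
  intros [Hm _] [Hp _] [Hq _].
  assert (Hprod : mul (mul p m) (mul q m) = mul (mul m m) (mul p q)).
  { destruct Hp as [Zp _]; destruct Hq as [Zq _].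
    rewrite (Zp m), (Zq m), <- !mulA; f_equal.
    rewrite (mulA p m q), (Zp m), <- mulA; reflexivity. }
  apply (Zn_divisor (f := mul m m) (N := k)); [lia | lia | | apply square_Low, Hm |].
  - repeat apply Zn_mul; try lia; assumption.
  - right; exists (mul p q); exact Hprod.
Qed.

(* b in (cb)X^1 would put b in c^k X^1, where c^k is a central element of H_e *)
Lemma Top_strict b c : Top b -> Top c -> ~ in_principal mul (mul c b) b.
Proof.
  intros Tb [[Zc Hc] _] Hprin.
  destruct (self_principal_pw Hprin (n := k) ltac:(lia)) as [t Ht].
  apply (Top_not_below_Low Tb (f := pw c k)); [| right; exists t; exact Ht].
  apply Zn_of_central_Hmax; [apply center_pw, Zc | exact Hc].
Qed.

(* the theorem at the least level k: F = (Z_(k-1) \ H_e) ∪ {g} ∪ C with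
   g = a^k in H_e for some a in Top, and A from the combinatorial core *)
Lemma main_at_level l : k <= l -> exists (F A : T -> Prop),
    finite_set F /\ (forall f, F f -> Zn mul e l f) /\
    infinite_set A /\
    (forall a, A a -> Zn mul e l a /\ ~ FX1 mul F a) /\
    (forall a b, A a -> A b -> F (mul a b) \/ H (mul a b)) /\
    (forall y, F y \/ H y -> FX1 mul F y).
Proof.
  intros Hkl.
  destruct (@ramsey_core T mul Top Low Top_infinite Top_closed Top_comm Top_square Top_shared Top_strict)
    as [A [C [HA [HC [AT [CT [AA AC]]]]]]].
  destruct (infinite_inhabited Top_infinite) as [a0 [[Za0 Hg] _]].
  set (g := pw a0 k) in Hg.
  assert (Lowg : Low g) by (apply Zn_of_central_Hmax; [apply center_pw | ]; assumption).
  assert (Top_l : forall z, Top z -> Zn mul e l z)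
    by (intros z [Hz _]; apply (Zn_mono (m := k)); [lia | exact Hkl | exact Hz]).
  assert (Low_l : forall z, Low z -> Zn mul e l z)
    by (intros z Hz; apply (Zn_mono (m := k - 1)); [lia | lia | exact Hz]).
  exists (fun y => (Low y /\ ~ H y) \/ y = g \/ C y), A.
  split; [| split; [| split; [| split; [| split]]]].
  - apply finite_union; [exact Zk1_finite | apply finite_union; [apply finite_singleton | exact HC]].
  - intros f [[Hf _]|[->|Hf]]; [apply Low_l, Hf | apply Low_l, Lowg | apply Top_l, CT, Hf].
  - exact HA.
  - intros a Aa; split; [apply Top_l, AT, Aa |]; intros [f [Ff Hprin]].
    destruct Ff as [[Lf _]|[->|Cf]].
    + exact (Top_not_below_Low (AT a Aa) Lf Hprin).
    + exact (Top_not_below_Low (AT a Aa) Lowg Hprin).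
    + apply (AC a Aa); exists f; split; assumption.
  - intros a b Aa Ab; destruct (AA a b Aa Ab) as [Lab|Cab]; [| left; right; right; exact Cab].
    destruct (classic (H (mul a b))); [right | left; left; split]; assumption.
  - intros y [Fy|Hy]; [exists y; split; [exact Fy | left; reflexivity] |].
    destruct (Hmax_principal Hg Hy) as [x Hx].
    exists g; split; [right; left; reflexivity | right; exists x; exact Hx].
Qed.

End Level.
End Semigroup.
Unset Implicit Arguments.

Theorem lemma7p1 (T : Type) (mul : T -> T -> T)
  (mulA : forall x y z, mul x (mul y z) = mul (mul x y) z)
  (Hper : periodic mul) (e : T) (He : idempotent mul e) (l : nat)
  (Hl : 1 <= l)
  (Hinf : infinite_set (fun z => Zn mul e l z /\ ~ Hmax mul e z)) :
  exists (F A : T -> Prop),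
    finite_set F /\ (forall f, F f -> Zn mul e l f) /\
    infinite_set A /\
    (forall a, A a -> Zn mul e l a /\ ~ FX1 mul F a) /\
    (forall a b, A a -> A b -> F (mul a b) \/ Hmax mul e (mul a b)) /\
    (forall y, F y \/ Hmax mul e y -> FX1 mul F y).
Proof.
  destruct (least_infinite_level Hinf) as [k [[Hk2 Hkl] [Hk Hk1]]].
  exact (main_at_level mulA He Hk2 Hk Hk1 Hkl).
Qed.
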